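(* Let $X,Y\in\mathbb M(n)$ with $Y$ positive semidefinite, with eigenvalues $\lambda_1(Y)\ge\dots\ge\lambda_n(Y)\ge0$. For $1\le r\le n$, let $$\mathcal W(X,Y)=\Big\{\sum_{i=1}^r\langle u_i,Xu_i\rangle:\ u_1,\dots,u_r\in\mathbb C^n\text{ orthonormal},\ Yu_i=\lambda_i(Y)u_i\ \forall\,1\le i\le r\Big\}.$$ Then $\mathcal W(X,Y)$ is a convex subset of $\mathbb C$.
   Context: Inner products on $\mathbb C^n$ are conjugate linear in the first argument and linear in the second. *)

(* Complex numbers: an arbitrary numClosedFieldType C
   (algebraically closed field with conjugation, e.g. the complex numbers). *)
From HB Require Import structures.
From mathcomp Require Import all_boot all_order all_algebra.
Set Implicit Arguments. Unset Strict Implicit. Unset Printing Implicit Defensive.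
Import Order.TTheory GRing.Theory Num.Theory.
Local Open Scope ring_scope.

Definition adjmx (C : numClosedFieldType) m n (A : 'M[C]_(m, n)) : 'M[C]_(n, m) :=
  (map_mx Num.conj A)^T.

Definition cdot (C : numClosedFieldType) n (u v : 'cV[C]_n) : C :=
  (adjmx u *m v) 0 0.

Definition hermitian (C : numClosedFieldType) n (A : 'M[C]_n) : Prop :=
  adjmx A = A.

Definition psd (C : numClosedFieldType) n (A : 'M[C]_n) : Prop :=
  hermitian A /\ forall x : 'cV[C]_n, 0 <= cdot x (A *m x).

(* lam 0 >= lam 1 >= ... >= lam (n-1) are the eigenvalues of Y, with multiplicity *)
Definition sorted_eigenvalues (C : numClosedFieldType) n (Y : 'M[C]_n)
    (lam : nat -> C) : Prop :=
  char_poly Y = \prod_(i < n) ('X - (lam i)%:P) /\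
  (forall i j : nat, (i <= j < n)%N -> lam j <= lam i).

Definition Wset (C : numClosedFieldType) n (r : nat) (X Y : 'M[C]_n)
    (lam : nat -> C) : C -> Prop :=
  fun z => exists u : 'I_r -> 'cV[C]_n,
    (forall i j : 'I_r, cdot (u i) (u j) = (i == j)%:R) /\
    (forall i : 'I_r, Y *m u i = lam i *: u i) /\
    z = \sum_(i < r) cdot (u i) (X *m u i).

Definition convex_set (C : numClosedFieldType) (S : C -> Prop) : Prop :=
  forall z1 z2 t : C, S z1 -> S z2 -> 0 <= t <= 1 -> S (t * z1 + (1 - t) * z2).

(* Put the r eigenvectors as the columns of an isometry Z with Y Z = Z D,
   D = diag lam; the points of W(X,Y) are the traces tr (Z^H X Z).  Two such
   frames P, Q are interpolated by induction on r.  The cross Gram matrix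
   P^H Q commutes with D, so after unitary changes of frame inside the
   eigenspaces it splits off a 1x1 block: the first columns p, q are unit
   vectors of one eigenspace, orthogonal to the other frame's remaining
   columns.  On span{p, q} the Toeplitz-Hausdorff argument applies: along a
   suitable real line z = p + x w q, <z,Xz> - <q,Xq><z,z> is an affine real
   multiple of <p,Xp> - <q,Xq>, so matching the weight t is a real quadratic
   equation with a real root. *)

From HB Require Import structures.
From mathcomp Require Import all_boot all_order all_algebra.
From mathcomp Require Import ring zify.
Import Order.TTheory GRing.Theory Num.Theory.
Local Open Scope ring_scope.
Set Implicit Arguments. Unset Strict Implicit. Unset Printing Implicit Defensive.

Section HermitianFrames.
Variable C : numClosedFieldType.
Local Notation "A ^H" := (adjmx A) (at level 8, format "A ^H").

Lemma adjmxM m n p (A : 'M[C]_(m,n)) (B : 'M[C]_(n,p)) :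
  (A *m B)^H = B^H *m A^H.
Proof. by rewrite /adjmx map_mxM trmx_mul. Qed.

Lemma adjmxK m n (A : 'M[C]_(m,n)) : A^H^H = A.
Proof. by apply/matrixP=> i j; rewrite /adjmx !mxE conjCK. Qed.

Lemma adjmxD m n (A B : 'M[C]_(m,n)) : (A + B)^H = A^H + B^H.
Proof. by apply/matrixP=> i j; rewrite /adjmx !mxE rmorphD. Qed.

Lemma adjmxB m n (A B : 'M[C]_(m,n)) : (A - B)^H = A^H - B^H.
Proof. by apply/matrixP=> i j; rewrite /adjmx !mxE rmorphB. Qed.

Lemma adjmxZ m n a (A : 'M[C]_(m,n)) : (a *: A)^H = a^* *: A^H.
Proof. by apply/matrixP=> i j; rewrite /adjmx !mxE rmorphM. Qed.

Lemma adjmx0 m n : (0 : 'M[C]_(m,n))^H = 0.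
Proof. by apply/matrixP=> i j; rewrite /adjmx !mxE conjC0. Qed.

Lemma adjmx_scalar n a : (a%:M : 'M[C]_n)^H = (a^*)%:M.
Proof.
apply/matrixP=> i j; rewrite /adjmx !mxE eq_sym.
by case: (i == j); rewrite ?mulr1n ?mulr0n ?conjC0.
Qed.

Lemma adjmx1 n : (1%:M : 'M[C]_n)^H = 1%:M.
Proof. by rewrite adjmx_scalar conjC1. Qed.

Lemma adjmx_eq0 m n (A : 'M[C]_(m,n)) : (A^H == 0) = (A == 0).
Proof. by apply/eqP/eqP => [h|->]; rewrite ?adjmx0 // -[A]adjmxK h adjmx0. Qed.

Lemma adjmx_row_mx m n1 n2 (A : 'M[C]_(m,n1)) (B : 'M[C]_(m,n2)) :
  (row_mx A B)^H = col_mx A^H B^H.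
Proof. by rewrite /adjmx map_row_mx tr_row_mx. Qed.

Lemma adjmx_col_mx m1 m2 n (A : 'M[C]_(m1,n)) (B : 'M[C]_(m2,n)) :
  (col_mx A B)^H = row_mx A^H B^H.
Proof. by rewrite /adjmx map_col_mx tr_col_mx. Qed.

Lemma adjmx_block m1 m2 n1 n2 (A : 'M[C]_(m1,n1)) (B : 'M[C]_(m1,n2))
   (A' : 'M[C]_(m2,n1)) (B' : 'M[C]_(m2,n2)) :
  (block_mx A B A' B')^H = block_mx A^H A'^H B^H B'^H.
Proof. by rewrite /adjmx map_block_mx tr_block_mx. Qed.

Lemma adjmx_mul_row_mx m k1 k2 (a : 'M[C]_(m,k1)) (b : 'M[C]_(m,k2))
    (a' : 'M[C]_(m,k1)) (b' : 'M[C]_(m,k2)) :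
  (row_mx a b)^H *m row_mx a' b' =
    block_mx (a^H *m a') (a^H *m b') (b^H *m a') (b^H *m b').
Proof. by rewrite adjmx_row_mx mul_col_row. Qed.

Lemma adjmx_diag_real k (d : 'rV[C]_k) :
  (forall j, (d 0 j)^* = d 0 j) -> (diag_mx d)^H = diag_mx d.
Proof.
move=> dR; apply/matrixP => i j; rewrite /adjmx !mxE eq_sym.
by case: eqP => [->|_]; rewrite ?mulr1n ?mulr0n ?conjC0 ?dR.
Qed.

Lemma mxrank_adjmx m n (A : 'M[C]_(m,n)) : \rank A^H = \rank A.
Proof. by rewrite /adjmx mxrank_tr mxrank_map. Qed.

Lemma adjmx_commute n (D M : 'M[C]_n) : D^H = D -> D *m M = M *m D ->
  D *m M^H = M^H *m D.
Proof. by move=> DH DM; rewrite -{1}DH -adjmxM -DM adjmxM DH. Qed.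

Lemma cdotE n (u v : 'cV[C]_n) : cdot u v = \sum_k (u k 0)^* * v k 0.
Proof. by rewrite /cdot !mxE; apply: eq_bigr => k _; rewrite /adjmx !mxE. Qed.

Lemma cdot_mx11 n (u v : 'cV[C]_n) : u^H *m v = (cdot u v)%:M.
Proof. exact: mx11_scalar. Qed.

Lemma cdotDl n (u w v : 'cV[C]_n) : cdot (u + w) v = cdot u v + cdot w v.
Proof. by rewrite /cdot adjmxD mulmxDl mxE. Qed.

Lemma cdotDr n (u w v : 'cV[C]_n) : cdot v (u + w) = cdot v u + cdot v w.
Proof. by rewrite /cdot mulmxDr mxE. Qed.

Lemma cdotBl n (u w v : 'cV[C]_n) : cdot (u - w) v = cdot u v - cdot w v.
Proof. by rewrite /cdot adjmxB mulmxBl !mxE. Qed.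

Lemma cdotBr n (u w v : 'cV[C]_n) : cdot v (u - w) = cdot v u - cdot v w.
Proof. by rewrite /cdot mulmxBr !mxE. Qed.

Lemma cdotZl n a (u v : 'cV[C]_n) : cdot (a *: u) v = a^* * cdot u v.
Proof. by rewrite /cdot adjmxZ -scalemxAl mxE. Qed.

Lemma cdotZr n a (u v : 'cV[C]_n) : cdot v (a *: u) = a * cdot v u.
Proof. by rewrite /cdot -scalemxAr mxE. Qed.

Lemma cdotC n (u v : 'cV[C]_n) : cdot v u = (cdot u v)^*.
Proof.
by rewrite !cdotE rmorph_sum; apply: eq_bigr=> k _; rewrite rmorphM /= conjCK mulrC.
Qed.

Lemma cdot_ge0 n (u : 'cV[C]_n) : 0 <= cdot u u.
Proof. by rewrite cdotE sumr_ge0 // => k _; rewrite mulrC mul_conjC_ge0. Qed.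

Lemma cdot_eq0 n (u : 'cV[C]_n) : (cdot u u == 0) = (u == 0).
Proof.
apply/idP/eqP => [|->]; last by rewrite /cdot mulmx0 mxE.
rewrite cdotE psumr_eq0 => [/allP uP|k _]; last by rewrite mulrC mul_conjC_ge0.
apply/matrixP => i j; rewrite ord1 mxE.
by apply/eqP; rewrite -mul_conjC_eq0 mulrC; apply: uP (mem_index_enum i).
Qed.

Lemma cdot1_neq0 n (a : 'cV[C]_n) : cdot a a = 1 -> a != 0.
Proof. by rewrite -cdot_eq0 => ->; rewrite oner_eq0. Qed.

Lemma cdot_adjmx n (A : 'M[C]_n) (u v : 'cV[C]_n) :
  cdot u (A *m v) = cdot (A^H *m u) v.
Proof. by rewrite /cdot adjmxM adjmxK mulmxA. Qed.

Lemma outer_mulmx n (w v : 'cV[C]_n) : (w *m w^H) *m v = cdot w v *: w.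
Proof. by rewrite -mulmxA cdot_mx11 mul_mx_scalar. Qed.

Lemma hermitian_eigenvalue_real n (D : 'M[C]_n) c (y : 'cV[C]_n) :
  D^H = D -> y != 0 -> D *m y = c *: y -> c^* = c.
Proof.
move=> DH y0 Dy; have yy0 : cdot y y != 0 by rewrite cdot_eq0.
apply: (mulIf yy0); rewrite -cdotZl -cdotZr -Dy.
by rewrite -{1}DH -cdot_adjmx Dy.
Qed.

Lemma normalize_cvec n (u : 'cV[C]_n) : u != 0 ->
  exists2 k : C, k != 0 & cdot (k *: u) (k *: u) = 1.
Proof.
rewrite -cdot_eq0 => uu0; exists (sqrtC (cdot u u))^-1.
  by rewrite invr_eq0 sqrtC_eq0.
rewrite cdotZl cdotZr mulrA geC0_conj ?invr_ge0 ?sqrtC_ge0 ?cdot_ge0 //.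
by rewrite -expr2 exprVn sqrtCK mulVf.
Qed.

Lemma unit_phase_real (c : C) : exists w : C, w^* * w = 1 /\ (w * c)^* = w * c.
Proof.
have [->|c0] := eqVneq c 0; first by exists 1; rewrite conjC1 mulr1 mulr0 conjC0.
have nc0 : `|c| != 0 by rewrite normr_eq0.
have ncR : (`|c|)^* = `|c| by rewrite geC0_conj.
exists (c^* / `|c|); split.
  by rewrite rmorphM /= conjCK fmorphV /= ncR mulrACA -normCK; field.
by rewrite mulrAC -normCKC expr2 mulfK.
Qed.

Lemma real_root_quadratic (a b c : C) : 0 < a -> b^* = b -> c <= 0 ->
  exists x : C, x^* = x /\ a * x ^+ 2 + b * x + c = 0.
Proof.
move=> a0 bR c0; set S := sqrtC (b ^+ 2 - 4 * a * c).
have disc0 : 0 <= b ^+ 2 - 4 * a * c.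
  rewrite subr_ge0 (le_trans _ (_ : 0 <= b ^+ 2)) //.
    by rewrite -mulrA mulr_ge0_le0 // mulr_ge0_le0 // ltW.
  by rewrite (_ : b ^+ 2 = `|b| ^+ 2) ?exprn_ge0 // normCKC bR expr2.
have SR : S^* = S by rewrite geC0_conj // sqrtC_ge0.
exists ((S - b) / (2 * a)); split.
  rewrite rmorphM /= fmorphV /= rmorphB rmorphM /= SR bR rmorph_nat.
  by rewrite geC0_conj ?ltW.
have SS : S ^+ 2 = b ^+ 2 - 4 * a * c by rewrite sqrtCK.
apply: (mulfI (_ : 4 * a != 0)); first by rewrite mulf_neq0 ?pnatr_eq0 // gt_eqF.
rewrite mulr0; apply/eqP; rewrite -subr_eq0 subr0; apply/eqP.
transitivity (S ^+ 2 - (b ^+ 2 - 4 * a * c)); last by rewrite SS subrr.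
by field; rewrite gt_eqF.
Qed.

Lemma pencil_values n (X : 'M[C]_n) (p q : 'cV[C]_n) :
  cdot p p = 1 -> cdot q q = 1 -> cdot p (X *m p) != cdot q (X *m q) ->
  exists om gam rho : C, [/\ om^* * om = 1, gam^* = gam, rho^* = rho &
    forall x z, x^* = x -> z = p + (x * om) *: q ->
      cdot z z = 1 + x * gam + x ^+ 2 /\
      cdot z (X *m z) = cdot q (X *m q) * cdot z z
                        + (cdot p (X *m p) - cdot q (X *m q)) * (1 + x * rho)].
Proof.
move=> pp qq; set w0 := cdot p _; set w1 := cdot q _; set d := w0 - w1 => w01.
have d0 : d != 0 by rewrite subr_eq0.
set g := cdot p q; have qp : cdot q p = g^* by rewrite cdotC.
set m1 := (cdot p (X *m q) - w1 * g) / d.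
set m2 := (cdot q (X *m p) - w1 * g^*) / d.
have pXq : cdot p (X *m q) = m1 * d + w1 * g by rewrite mulfVK ?subrK.
have qXp : cdot q (X *m p) = m2 * d + w1 * g^* by rewrite mulfVK ?subrK.
clearbody m1 m2.
have [om [omU omR]] := unit_phase_real (m1 - m2^*).
exists om, (om * g + (om * g)^*), (om * m1 + om^* * m2); split => //.
- by rewrite rmorphD /= conjCK addrC.
- apply/eqP; rewrite -subr_eq0 -[E in _ == E](subrr (om * (m1 - m2^*))).
  rewrite -{1}omR !rmorphD !rmorphM /= rmorphB /= !conjCK.
  by apply/eqP; ring.
move=> x z xR ->.
rewrite mulmxDr -scalemxAr !cdotDl !cdotDr !cdotZl !cdotZr !rmorphM /= xR.
rewrite pp qq qp pXq qXp -/w0 -/w1 -/g.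
split; apply/eqP; rewrite -subr_eq0; apply/eqP.
  by transitivity (x ^+ 2 * (om^* * om - 1)); [ring | rewrite omU subrr mulr0].
by rewrite /d; ring.
Qed.

Lemma unit_pencil_interpolation n (X : 'M[C]_n) (p q : 'cV[C]_n) (t : C) :
  cdot p p = 1 -> cdot q q = 1 -> 0 <= t <= 1 ->
  exists a b : C, cdot (a *: p + b *: q) (a *: p + b *: q) = 1 /\
    cdot (a *: p + b *: q) (X *m (a *: p + b *: q)) =
      t * cdot p (X *m p) + (1 - t) * cdot q (X *m q).
Proof.
move=> pp qq /andP[t0 t1].
set w0 := cdot p _; set w1 := cdot q _.
have [w01|w01] := eqVneq w0 w1.
  exists 1, 0; rewrite scale0r addr0 scale1r pp -/w0 w01; split => //; ring.
have [->|tn0] := eqVneq t 0.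
  exists 0, 1; rewrite scale0r add0r scale1r qq -/w1; split => //; ring.
have [om [gam [rho [omU gamR rhoR zE]]]] := pencil_values pp qq w01.
have tR : t^* = t by rewrite geC0_conj.
have [|||x [xR root]] := @real_root_quadratic t (t * gam - rho) (t - 1).
- by rewrite lt_def tn0.
- by rewrite rmorphB rmorphM /= tR gamR rhoR.
- by rewrite subr_le0.
set z := p + (x * om) *: q.
have [zz zXz] := zE x z xR erefl.
have tzz : t * cdot z z = 1 + x * rho.
  by apply/eqP; rewrite -subr_eq0 -root zz; apply/eqP; ring.
have zz0 : cdot z z != 0.
  apply: contraNneq w01 => /eqP; rewrite cdot_eq0 addr_eq0 -scaleNr => /eqP pE.
  have conj_s : (- (x * om))^* * - (x * om) = x ^+ 2.
    by rewrite rmorphN rmorphM /= xR mulrNN mulrACA omU mulr1 expr2.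
  have x2 : x ^+ 2 = 1 by rewrite -conj_s -pp pE cdotZl cdotZr qq mulr1.
  by rewrite /w0 pE -scalemxAr cdotZl cdotZr -/w1 mulrA conj_s x2 mul1r.
have [k _ kk] : exists2 k : C, k != 0 & cdot (k *: z) (k *: z) = 1.
  by apply: normalize_cvec; rewrite -cdot_eq0.
rewrite cdotZl cdotZr mulrA in kk.
exists k, (k * (x * om)).
have -> : k *: p + (k * (x * om)) *: q = k *: z by rewrite scalerDr scalerA.
rewrite -scalemxAr !cdotZl !cdotZr !mulrA kk; split => //.
rewrite zXz -tzz -/w0 -/w1.
transitivity ((w1 + (w0 - w1) * t) * (k^* * k * cdot z z)); first by ring.
by rewrite kk; ring.
Qed.

(* The reflection through [b - a]: it swaps [a] and [b] when [<a, b>] is real,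
   and fixes the orthogonal complement of [b - a], so it commutes with every
   Hermitian [D] having [a] and [b] in one eigenspace. *)
Lemma reflection_swap n (a b : 'cV[C]_n) :
  cdot a a = 1 -> cdot b b = 1 -> (cdot a b)^* = cdot a b ->
  exists H : 'M[C]_n, [/\ H^H *m H = 1%:M, H *m b = a &
    forall (D : 'M[C]_n) c, D^H = D -> D *m a = c *: a -> D *m b = c *: b ->
      D *m H = H *m D].
Proof.
move=> aa bb; set r := cdot a b => rR.
set w := b - a.
have wb : cdot w b = 1 - r by rewrite cdotBl bb.
have ww : cdot w w = 2 * (1 - r).
  by rewrite !cdotBl !cdotBr bb aa -/r cdotC -/r rR; ring.
set s := 2 / cdot w w.
have sR : s^* = s.
  by rewrite rmorphM /= fmorphV /= (geC0_conj (cdot_ge0 _)) rmorph_nat.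
have ssw : s * s * cdot w w = 2 * s.
  have [w0|w0] := eqVneq (cdot w w) 0; first by rewrite /s w0 invr0 !mulr0.
  by rewrite /s; field.
have sw : (s * cdot w b) *: w = w.
  have [/eqP|w0] := eqVneq (cdot w w) 0.
    by rewrite cdot_eq0 => /eqP ->; rewrite scaler0.
  have r1 : 1 - r != 0 by apply: contraNneq w0 => r1; rewrite ww r1 mulr0.
  by rewrite wb /s ww (_ : 2 / (2 * (1 - r)) * (1 - r) = 1) ?scale1r //; field.
set W := w *m w^H; set H := 1%:M - s *: W.
have HH : H^H = H by rewrite adjmxB adjmx1 adjmxZ adjmxM adjmxK sR.
have WW : W *m W = cdot w w *: W by rewrite mulmxA outer_mulmx scalemxAl.
exists H; split.
- rewrite HH mulmxBl mul1mx mulmxBr mulmx1 -scalemxAl -scalemxAr !scalerA WW.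
  by rewrite scalerA ssw (_ : 2 * s = s + s) ?scalerDl ?opprB ?addrK ?subrK //; ring.
- by rewrite mulmxBl mul1mx -scalemxAl outer_mulmx scalerA sw opprB addrC subrK.
move=> D c DH Da Db.
have cR : c^* = c by apply: hermitian_eigenvalue_real DH (cdot1_neq0 aa) Da.
have Dw : D *m w = c *: w by rewrite mulmxBr Db Da scalerBr.
have wD : w^H *m D = c *: w^H by rewrite -DH -adjmxM Dw adjmxZ cR.
have DW : D *m W = W *m D.
  by rewrite mulmxA Dw -mulmxA wD -scalemxAl scalemxAr.
by rewrite mulmxBr mulmxBl mulmx1 mul1mx -!scalemxAr -scalemxAl DW.
Qed.

Lemma unitary_transport n (a b : 'cV[C]_n) : cdot a a = 1 -> cdot b b = 1 ->
  exists R : 'M[C]_n, [/\ R^H *m R = 1%:M, R *m b = a &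
    forall (D : 'M[C]_n) c, D^H = D -> D *m a = c *: a -> D *m b = c *: b ->
      D *m R = R *m D].
Proof.
move=> aa bb; have [om [omU omR]] := unit_phase_real (cdot a b).
have omU' : om * om^* = 1 by rewrite mulrC.
have a'a' : cdot (om^* *: a) (om^* *: a) = 1.
  by rewrite cdotZl cdotZr conjCK mulrA omU' aa mul1r.
have [|H [HH Hb HD]] := reflection_swap a'a' bb; first by rewrite cdotZl conjCK.
exists (om *: H); split.
- by rewrite adjmxZ -scalemxAl -scalemxAr scalerA omU HH scale1r.
- by rewrite -scalemxAl Hb scalerA omU' scale1r.
move=> D c DH Da Db.
rewrite -scalemxAr -scalemxAl (HD D c) // -scalemxAr Da.
by rewrite !scalerA mulrC.
Qed.

Lemma unitary_adj_mulmx n (S : 'M[C]_n) (u v : 'cV[C]_n) :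
  S^H *m S = 1%:M -> S *m u = v -> S^H *m v = u.
Proof. by move=> SS <-; rewrite mulmxA SS mul1mx. Qed.

(* Inside the [c]-eigenspace [E] of [D], which [N] and [N^H] both preserve,
   [E N] has smaller rank than [E], so the left kernel of [(E N)^H] meets [E]. *)
Lemma eigen_row_adjoint_kernel k (D N : 'M[C]_k) c (v : 'rV[C]_k) :
  D^H = D -> D *m N = N *m D -> v != 0 -> v *m D = c *: v -> v *m N = 0 ->
  exists2 w : 'rV[C]_k, w != 0 & w *m D = c *: w /\ w *m N^H = 0.
Proof.
move=> DH DN v0 vD vN.
set E := kermx (D - c%:M).
have inE (u : 'rV[C]_k) : (u <= E)%MS = (u *m D == c *: u).
  rewrite /E; apply/sub_kermxP/eqP; rewrite mulmxBr mul_mx_scalar.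
    by move/eqP; rewrite subr_eq0 => /eqP.
  by move->; rewrite subrr.
set EN := E *m N.
have rkEN : (\rank EN < \rank E)%N.
  rewrite -(mxrank_mul_ker E N) -/EN -[X in (X < _)%N]addn0 ltn_add2l.
  rewrite lt0n mxrank_eq0.
  apply/rowV0Pn; exists v => //; rewrite sub_capmx inE vD eqxx /=.
  exact/sub_kermxP.
set K := kermx EN^H.
have rkK : \rank K = (k - \rank EN)%N by rewrite mxrank_ker mxrank_adjmx.
have /rowV0Pn [w] : (E :&: K)%MS != 0.
  rewrite -mxrank_eq0 -lt0n.
  have := mxrank_sum_cap E K; have := rank_leq_col (E + K)%MS.
  have := rank_leq_col EN; lia.
rewrite sub_capmx => /andP[wE wK] w0.
exists w => //; split; first by apply/eqP; rewrite -inE.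
set u := w *m N^H.
have /submxP [e ue] : (u <= E)%MS.
  rewrite inE /u -mulmxA -(adjmx_commute DH DN) mulmxA.
  by move: wE; rewrite inE => /eqP ->; rewrite scalemxAl.
apply/eqP; rewrite -adjmx_eq0 -cdot_eq0 /cdot adjmxK.
have -> : u *m u^H = w *m (u *m N)^H by rewrite [(u *m N)^H]adjmxM mulmxA.
rewrite ue -mulmxA -/EN adjmxM mulmxA.
by move/sub_kermxP: wK => ->; rewrite mul0mx mxE.
Qed.

(* [y] is a common eigenvector of [D] and [M^H M]; [x] is [M y] normalized,
   or, when [M y = 0], a vector of the same eigenspace killed by [M^H]. *)
Lemma commuting_eigen_pair k (D M : 'M[C]_k) : (0 < k)%N -> D^H = D ->
  D *m M = M *m D ->
  exists c (x y : 'cV[C]_k),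
    [/\ cdot x x = 1, cdot y y = 1, D *m x = c *: x & D *m y = c *: y] /\
    (exists al, M *m y = al *: x) /\ (exists be, M^H *m x = be *: y).
Proof.
move=> k0 DH DM; have DMH := adjmx_commute DH DM.
set G := M^H *m M.
have DG : D *m G = G *m D by rewrite mulmxA DMH -!mulmxA DM.
have DGT : D^T *m G^T = G^T *m D^T by rewrite -!trmx_mul DG.
have [v v0 /andP[/sub_rVP [c vD] /sub_rVP [mu vG]]] := common_eigenvector2 k0 DGT.
have y00 : v^T != 0 by rewrite trmx_eq0.
have Dy0 : D *m v^T = c *: v^T by rewrite -[D]trmxK -trmx_mul vD linearZ.
have Gy0 : G *m v^T = mu *: v^T by rewrite -[G]trmxK -trmx_mul vG linearZ.
have [ky _ yy] := normalize_cvec y00; set y := ky *: v^T.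
have Dy : D *m y = c *: y by rewrite -scalemxAr Dy0 !scalerA mulrC.
have Gy : G *m y = mu *: y by rewrite -scalemxAr Gy0 !scalerA mulrC.
have [My0|My0] := eqVneq (M *m y) 0.
  have cR : c^* = c.
    by apply: hermitian_eigenvalue_real DH (cdot1_neq0 yy) Dy.
  have [|||w w0 [wD wM]] := @eigen_row_adjoint_kernel _ D M^H c y^H DH DMH.
  - by rewrite adjmx_eq0 cdot1_neq0.
  - by rewrite -{1}DH -adjmxM Dy adjmxZ cR.
  - by rewrite -adjmxM My0 adjmx0.
  rewrite adjmxK in wM; have x00 : w^H != 0 by rewrite adjmx_eq0.
  have [kx _ xx] := normalize_cvec x00.
  exists c, (kx *: w^H), y; split; first split => //.
    by rewrite -scalemxAr -{1}DH -adjmxM wD adjmxZ cR scalerA mulrC -scalerA.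
  split; first by exists 0; rewrite My0 scale0r.
  by exists 0; rewrite -scalemxAr -adjmxM wM adjmx0 scaler0 scale0r.
have [kx kx0 xx] := normalize_cvec My0.
exists c, (kx *: (M *m y)), y; split; first split => //.
  by rewrite -scalemxAr mulmxA DM -mulmxA Dy -scalemxAr scalerA mulrC -scalerA.
split; first by exists kx^-1; rewrite scalerA mulVf // scale1r.
by exists (kx * mu); rewrite -scalemxAr mulmxA -/G Gy scalerA.
Qed.

Definition firstcol k : 'cV[C]_(1 + k) := col_mx 1%:M 0.

Lemma adjmx_firstcol k : (firstcol k)^H = row_mx 1%:M 0.
Proof. by rewrite adjmx_col_mx adjmx1 adjmx0. Qed.

Lemma cdot_firstcol k : cdot (firstcol k) (firstcol k) = 1.
Proof.
by rewrite /cdot adjmx_firstcol mul_row_col mul1mx mulmx0 addr0 mxE eqxx.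
Qed.

Lemma block_firstcol k (T : 'M[C]_(1 + k)) a b :
  T *m firstcol k = a *: firstcol k -> (firstcol k)^H *m T = b *: (firstcol k)^H ->
  T = block_mx a%:M 0 0 (drsubmx T).
Proof.
rewrite adjmx_firstcol -[T]submxK mul_block_col mul_row_block !mulmx1 !mulmx0.
rewrite !mul1mx !mul0mx !addr0 scale_col_mx scale_row_mx !scaler0 scalemx1.
by case/eq_col_mx => -> ->; case/eq_row_mx => _ ->; rewrite block_mxKdr.
Qed.

(* Move the eigen pair of [commuting_eigen_pair] to the first basis vector on
   both sides: [y] by a unitary [R1], and [x] by [R2 R1] where [R2] maps [y]
   to [x] commuting with [D]. *)
Lemma commuting_first_block k (D M : 'M[C]_(1 + k)) :
  D^H = D -> D *m M = M *m D ->
  exists SP SQ : 'M[C]_(1 + k),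
    [/\ SP^H *m SP = 1%:M, SQ^H *m SQ = 1%:M, SP^H *m D *m SP = SQ^H *m D *m SQ,
        exists c, SQ^H *m D *m SQ = block_mx c%:M 0 0 (drsubmx (SQ^H *m D *m SQ))
      & exists a, SP^H *m M *m SQ = block_mx a%:M 0 0 (drsubmx (SP^H *m M *m SQ))].
Proof.
move=> DH DM.
have [c [x [y [[xx yy Dx Dy] [[al Myx] [be MHxy]]]]]] :=
  commuting_eigen_pair (ltn0Sn k) DH DM.
have [R1 [R1U R1e _]] := unitary_transport yy (cdot_firstcol k).
have [R2 [R2U R2y R2D]] := unitary_transport xx yy.
have DR2 := R2D D c DH Dx Dy.
have SPU : (R2 *m R1)^H *m (R2 *m R1) = 1%:M.
  by rewrite adjmxM mulmxA -(mulmxA R1^H) R2U mulmx1 R1U.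
have SPe : R2 *m R1 *m firstcol k = x by rewrite -mulmxA R1e R2y.
exists (R2 *m R1), R1; split => //.
- rewrite adjmxM -!mulmxA (mulmxA D R2) DR2 -(mulmxA R2).
  by rewrite (mulmxA R2^H) R2U mul1mx mulmxA.
- have D1H : (R1^H *m D *m R1)^H = R1^H *m D *m R1.
    by rewrite !adjmxM adjmxK DH mulmxA.
  have D1e : R1^H *m D *m R1 *m firstcol k = c *: firstcol k.
    by rewrite -!mulmxA R1e Dy -scalemxAr (unitary_adj_mulmx R1U R1e).
  exists c; apply: (block_firstcol D1e).
  by rewrite -{1}D1H -adjmxM D1e adjmxZ.
exists al; apply: (block_firstcol (b := be^*)).
  by rewrite -!mulmxA R1e Myx -scalemxAr -SPe mulmxA SPU mul1mx.
have THe : ((R2 *m R1)^H *m M *m R1)^H *m firstcol k = be *: firstcol k.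
  rewrite !adjmxM !adjmxK -!mulmxA (mulmxA R2) SPe MHxy -scalemxAr.
  by rewrite (unitary_adj_mulmx R1U R1e).
by rewrite -[LHS]adjmxK adjmxM adjmxK THe adjmxZ.
Qed.

Lemma mxtrace_compress_row_mx n k1 k2 (X : 'M[C]_n) (a : 'M[C]_(n,k1))
    (b : 'M[C]_(n,k2)) :
  \tr ((row_mx a b)^H *m X *m row_mx a b) =
    \tr (a^H *m X *m a) + \tr (b^H *m X *m b).
Proof. by rewrite adjmx_row_mx mul_col_mx mul_col_row mxtrace_block. Qed.

Lemma mxtrace_compress_cvec n (X : 'M[C]_n) (u : 'cV[C]_n) :
  \tr (u^H *m X *m u) = cdot u (X *m u).
Proof. by rewrite trace_mx11 -mulmxA. Qed.

Lemma mxtrace_compress_unitary n k (X : 'M[C]_n) (F : 'M[C]_(n,k)) (S : 'M[C]_k) :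
  S^H *m S = 1%:M -> \tr ((F *m S)^H *m X *m (F *m S)) = \tr (F^H *m X *m F).
Proof.
move/mulmx1C => SS; rewrite adjmxM -!mulmxA mxtrace_mulC -!mulmxA.
by rewrite !mulmxA -(mulmxA _ S) SS mulmx1.
Qed.

Lemma isometry_mulmx_unitary n k (F : 'M[C]_(n,k)) (S : 'M[C]_k) :
  F^H *m F = 1%:M -> S^H *m S = 1%:M -> (F *m S)^H *m (F *m S) = 1%:M.
Proof. by move=> FF SS; rewrite adjmxM mulmxA -(mulmxA S^H) FF mulmx1. Qed.

Lemma eigenframe_mulmx_unitary n k (Y : 'M[C]_n) (D : 'M[C]_k) (F : 'M[C]_(n,k))
    (S : 'M[C]_k) :
  S^H *m S = 1%:M -> Y *m F = F *m D -> Y *m (F *m S) = F *m S *m (S^H *m D *m S).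
Proof.
move=> /mulmx1C SS YF.
by rewrite mulmxA YF !mulmxA -(mulmxA F S) SS mulmx1.
Qed.

Lemma eigenframe_row_mx n k (Y : 'M[C]_n) (a : 'cV[C]_n) (b : 'M[C]_(n,k)) c
    (D : 'M[C]_k) :
  Y *m row_mx a b = row_mx a b *m block_mx c%:M 0 0 D <->
  Y *m a = c *: a /\ Y *m b = b *m D.
Proof.
rewrite mul_mx_row mul_row_block !mulmx0 addr0 add0r mul_mx_scalar.
by split => [/eq_row_mx|[-> ->]].
Qed.

Lemma col_mulmx m k l (A : 'M[C]_(m,k)) (B : 'M[C]_(k,l)) j :
  col j (A *m B) = A *m col j B.
Proof. by rewrite !colE mulmxA. Qed.

Lemma adjmx_mulmx_col m k (A B : 'M[C]_(m,k)) i j :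
  (A^H *m B) i j = cdot (col i A) (col j B).
Proof. by rewrite /cdot !mxE; apply: eq_bigr => l _; rewrite /adjmx !mxE. Qed.

Lemma mxtrace_compress_cols n k (X : 'M[C]_n) (A : 'M[C]_(n,k)) :
  \tr (A^H *m X *m A) = \sum_i cdot (col i A) (X *m col i A).
Proof. by apply: eq_bigr => i _; rewrite -mulmxA adjmx_mulmx_col col_mulmx. Qed.

Lemma eigen_cols_diag n k (Y : 'M[C]_n) (W : 'M[C]_(n,k)) (d : 'rV[C]_k) :
  (forall j, Y *m col j W = d 0 j *: col j W) <-> Y *m W = W *m diag_mx d.
Proof.
rewrite mul_mx_diag; split => [YW|YW j].
  apply/matrixP => i j; have /matrixP /(_ i 0) := YW j.
  by rewrite -col_mulmx !mxE mulrC.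
by rewrite -col_mulmx YW; apply/matrixP => i l; rewrite !mxE mulrC.
Qed.

Lemma eigenframe_of_family n k (Y : 'M[C]_n) (lam : 'I_k -> C)
    (u : 'I_k -> 'cV[C]_n) :
  (forall i j, cdot (u i) (u j) = (i == j)%:R) ->
  (forall j, Y *m u j = lam j *: u j) ->
  exists U : 'M[C]_(n,k),
    [/\ U^H *m U = 1%:M, Y *m U = U *m diag_mx (\row_j lam j) &
    forall X, \tr (U^H *m X *m U) = \sum_j cdot (u j) (X *m u j)].
Proof.
move=> uu Yu; set U : 'M[C]_(n,k) := \matrix_(i, j) u j i 0.
have colU j : col j U = u j by apply/matrixP => i l; rewrite !mxE ord1.
exists U; split.
- by apply/matrixP => i j; rewrite adjmx_mulmx_col !colU uu mxE.
- by apply/eigen_cols_diag => j; rewrite colU mxE.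
by move=> X; rewrite mxtrace_compress_cols; apply: eq_bigr => j _; rewrite colU.
Qed.

Section Interpolation.
Variables (n : nat) (X Y : 'M[C]_n).

Definition eigenframe_interpolation k := forall (D : 'M[C]_k) (P Q : 'M[C]_(n,k)) t,
  D^H = D -> P^H *m P = 1%:M -> Q^H *m Q = 1%:M ->
  Y *m P = P *m D -> Y *m Q = Q *m D -> 0 <= t <= 1 ->
  exists Z : 'M[C]_(n,k), [/\ Z^H *m Z = 1%:M, Y *m Z = Z *m D,
    \tr (Z^H *m X *m Z) = t * \tr (P^H *m X *m P) + (1 - t) * \tr (Q^H *m X *m Q) &
    exists A B, Z = P *m A + Q *m B].

Lemma eigenframe_interpolation0 : eigenframe_interpolation 0.
Proof.
move=> D P Q t _ PP _ YP _ _; exists P; split => //.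
  by rewrite /mxtrace !big_ord0 !mulr0 addr0.
by exists 1%:M, 0; rewrite mulmx1 mulmx0 addr0.
Qed.

(* The zero off-diagonal blocks of the cross Gram matrix make the
   combination of [p] and [q] orthogonal to that of [P] and [Q]. *)
Lemma eigenframe_interpolation_block k c (D : 'M[C]_k) (p q : 'cV[C]_n)
    (P Q : 'M[C]_(n,k)) a (T : 'M[C]_k) t :
  eigenframe_interpolation k -> D^H = D ->
  (row_mx p P)^H *m row_mx p P = 1%:M -> (row_mx q Q)^H *m row_mx q Q = 1%:M ->
  Y *m row_mx p P = row_mx p P *m block_mx c%:M 0 0 D ->
  Y *m row_mx q Q = row_mx q Q *m block_mx c%:M 0 0 D ->
  (row_mx p P)^H *m row_mx q Q = block_mx a%:M 0 0 T -> 0 <= t <= 1 ->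
  exists Z : 'M[C]_(n, 1 + k), [/\ Z^H *m Z = 1%:M,
    Y *m Z = Z *m block_mx c%:M 0 0 D,
    \tr (Z^H *m X *m Z) = t * \tr ((row_mx p P)^H *m X *m row_mx p P)
                          + (1 - t) * \tr ((row_mx q Q)^H *m X *m row_mx q Q) &
    exists A B, Z = row_mx p P *m A + row_mx q Q *m B].
Proof.
move=> IH DH; rewrite !adjmx_mul_row_mx (scalar_mx_block 1 k).
move=> /eq_block_mx [pp pP _ PP] /eq_block_mx [qq qQ _ QQ].
move=> /eigenframe_row_mx [Yp YP] /eigenframe_row_mx [Yq YQ].
move=> /eq_block_mx [_ pQ Pq _] t01.
have qP : q^H *m P = 0 by rewrite -[P]adjmxK -adjmxM Pq adjmx0.
have [Z' [Z'Z' YZ' trZ' [A [B Z'E]]]] := IH D P Q t DH PP QQ YP YQ t01.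
have pp1 : cdot p p = 1 by rewrite /cdot pp mxE.
have qq1 : cdot q q = 1 by rewrite /cdot qq mxE.
have [a' [b' [zz zXz]]] := unit_pencil_interpolation X pp1 qq1 t01.
set z := a' *: p + b' *: q.
have zZ' : z^H *m Z' = 0.
  rewrite Z'E adjmxD !adjmxZ mulmxDl !mulmxDr -!scalemxAl !mulmxA.
  by rewrite pP pQ qP qQ !mul0mx !scaler0 !addr0.
exists (row_mx z Z'); split.
- rewrite adjmx_mul_row_mx zZ' Z'Z' cdot_mx11 zz.
  by rewrite -[Z'^H *m z]adjmxK adjmxM adjmxK zZ' adjmx0 -scalar_mx_block.
- apply/eigenframe_row_mx; split => //.
  rewrite mulmxDr -!scalemxAr Yp Yq !scalerA (mulrC a') (mulrC b').
  by rewrite -!scalerA scalerDr.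
- rewrite !mxtrace_compress_row_mx trZ' !mxtrace_compress_cvec zXz; ring.
exists (block_mx a'%:M 0 0 A), (block_mx b'%:M 0 0 B).
rewrite !mul_row_block !mulmx0 !addr0 !add0r !mul_mx_scalar add_row_mx.
by rewrite Z'E.
Qed.

Hypothesis YH : Y^H = Y.

Lemma eigenframe_interpolationS k :
  eigenframe_interpolation k -> eigenframe_interpolation (1 + k).
Proof.
move=> IH D P Q t DH PP QQ YP YQ t01.
have DM : D *m (P^H *m Q) = P^H *m Q *m D.
  by rewrite mulmxA -{1}DH -adjmxM -YP adjmxM YH -mulmxA YQ mulmxA.
have [SP [SQ [SPU SQU D1E [c D1b] [a Tb]]]] := commuting_first_block DH DM.
set D1 := SQ^H *m D *m SQ in D1E D1b.
have D1H : D1^H = D1 by rewrite !adjmxM adjmxK DH mulmxA.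
have D'H : (drsubmx D1)^H = drsubmx D1.
  by have := congr1 drsubmx D1H; rewrite {1}D1b adjmx_block block_mxKdr.
set P1 := P *m SP; set Q1 := Q *m SQ.
have YP1 : Y *m P1 = P1 *m D1 by rewrite (eigenframe_mulmx_unitary SPU YP) D1E.
have YQ1 : Y *m Q1 = Q1 *m D1 by rewrite (eigenframe_mulmx_unitary SQU YQ).
have T1b : P1^H *m Q1 = block_mx a%:M 0 0 (drsubmx (SP^H *m (P^H *m Q) *m SQ)).
  by rewrite adjmxM !mulmxA -(mulmxA _ P^H) -Tb.
rewrite D1b -[P1]hsubmxK -[Q1]hsubmxK in YP1 YQ1 T1b.
have [||Z1 [Z1Z1 YZ1 trZ1 [A [B Z1E]]]] :=
  eigenframe_interpolation_block IH D'H _ _ YP1 YQ1 T1b t01.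
- by rewrite hsubmxK isometry_mulmx_unitary.
- by rewrite hsubmxK isometry_mulmx_unitary.
rewrite !hsubmxK -D1b in YZ1 trZ1 Z1E.
have SQU' : SQ^H^H *m SQ^H = 1%:M by rewrite adjmxK mulmx1C.
have D1D : SQ^H^H *m D1 *m SQ^H = D.
  by rewrite adjmxK /D1 !mulmxA (mulmx1C SQU) mul1mx -mulmxA
    (mulmx1C SQU) mulmx1.
exists (Z1 *m SQ^H); split.
- exact: isometry_mulmx_unitary Z1Z1 SQU'.
- by rewrite (eigenframe_mulmx_unitary SQU' YZ1) D1D.
- rewrite mxtrace_compress_unitary // trZ1.
  by rewrite !mxtrace_compress_unitary.
by exists (SP *m A *m SQ^H), (SQ *m B *m SQ^H); rewrite Z1E mulmxDl !mulmxA.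
Qed.

Lemma eigenframes_interpolate k : eigenframe_interpolation k.
Proof.
elim: k => [|k IH]; first exact: eigenframe_interpolation0.
exact: eigenframe_interpolationS.
Qed.

End Interpolation.

End HermitianFrames.

Theorem lemma3p1 (C : numClosedFieldType) (n : nat) (X Y : 'M[C]_n)
    (lam : nat -> C) (r : nat) :
  psd Y -> sorted_eigenvalues Y lam -> (1 <= r)%N -> (r <= n)%N ->
  convex_set (Wset r X Y lam).
Proof.
move=> [YH _] _ _ _ z1 z2 t [u [uu [Yu ->]]] [v [vv [Yv ->]]] t01.
have [U [UU YU trU]] := eigenframe_of_family uu Yu.
have [V [VV YV trV]] := eigenframe_of_family vv Yv.
have dH : adjmx (diag_mx (\row_(j < r) lam j)) = diag_mx (\row_j lam j).
  apply: adjmx_diag_real => j; rewrite mxE.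
  by apply: hermitian_eigenvalue_real YH (cdot1_neq0 _) (Yu j); rewrite uu eqxx.
have [Z [ZZ /eigen_cols_diag YZ trZ _]] :=
  eigenframes_interpolate X YH dH UU VV YU YV t01.
exists (fun j => col j Z); split; last split.
- by move=> i j; rewrite -adjmx_mulmx_col ZZ mxE.
- by move=> i; rewrite YZ mxE.
by rewrite -mxtrace_compress_cols trZ trU trV.
Qed.
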